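(* Let $(\rho_n)$, $(\tau_n)$ be sequences of positive functions on $\mathbb{R}^2$ with $\int_{\mathbb{R}^2}\rho_n dx=a>0$ and $\int_{\mathbb{R}^2}\tau_n dx=b>0$ for all $n$. Suppose $(B_1(\rho_n,\tau_n))$ is bounded. Then for every $\varepsilon>0$ there exists $\xi(\varepsilon)>0$ such that for all $r>\xi$ and all $n\in\mathbb{N}$, $$\sup_{x\in\mathbb{R}^2}\int_{B_r(x)}\rho_n(y)dy\ge a-\varepsilon\quad\text{and}\quad \sup_{x\in\mathbb{R}^2}\int_{B_r(x)}\tau_n(y)dy\ge b-\varepsilon.$$
   Context: $B_1(f,g):=\iint_{\mathbb{R}^2\times\mathbb{R}^2}\log(1+|x-y|)f(x)g(y)\,dx\,dy$ for nonnegative measurable $f,g$; $B_r(x)$ is the ball of radius $r$ centered at $x$. *)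

From HB Require Import structures.
From mathcomp Require Import all_boot all_order all_algebra.
From mathcomp Require Import all_classical all_reals all_analysis.
Set Implicit Arguments. Unset Strict Implicit. Unset Printing Implicit Defensive.
Import Order.TTheory GRing.Theory Num.Theory.
Import numFieldNormedType.Exports.
Local Open Scope classical_set_scope.
Local Open Scope ring_scope.

Definition leb2 (R : realType) :=
  ((@lebesgue_measure R) \x (@lebesgue_measure R))%E.

(* Euclidean distance on R^2 (NOT the max-norm of the product normed space). *)
Definition dist2 (R : realType) (x y : R * R) : R :=
  Num.sqrt ((x.1 - y.1) ^+ 2 + (x.2 - y.2) ^+ 2).

Definition eball2 (R : realType) (x : R * R) (r : R) : set (R * R) :=
  [set y | dist2 x y < r].

(* B_1(f,g) = \iint log(1+|x-y|) f(x) g(y) dx dy, as an iterated integral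
   (integrand nonnegative, so by Tonelli this equals the double integral). *)
Definition B1 (R : realType) (f g : R * R -> R) : \bar R :=
  (\int[@leb2 R]_x \int[@leb2 R]_y
     (ln (1 + dist2 x y) * f x * g y)%:E)%E.

From HB Require Import structures.
From mathcomp Require Import all_boot all_order all_algebra.
From mathcomp Require Import all_classical all_reals all_analysis.
From mathcomp Require Import measurable_realfun lra.
Import Order.TTheory GRing.Theory Num.Theory.
Import numFieldNormedType.Exports.
Local Open Scope classical_set_scope.
Local Open Scope ring_scope.

(* Since [ln (1 + |x - y|) >= ln (1 + s)] as soon as [|x - y| >= s], a bound
   [M] on [B1 rho tau] forbids mass of [rho] and mass of [tau] from sitting far
   apart.  If every ball of radius [s] carried [tau]-mass [< b - delta], then
   for every [x] a [tau]-mass [delta] would lie at distance [>= s] from [x],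
   whence [B1 rho tau >= ln (1 + s) a delta > M] for [s] large.  So a ball
   [B_(r/2)(x0)] carries half of the mass of [tau]; every point outside
   [B_r(x0)] is at distance [>= r/2] from that ball, so a [rho]-mass [eps]
   outside [B_r(x0)] would give [B1 rho tau >= ln (1 + r/2) (b/2) eps > M]. *)

Section integral_bounds.
Context {d} {T : measurableType d} {R : realType} {mu : {measure set T -> \bar R}}.
Local Open Scope ereal_scope.

(* No measurability is needed: the integral of a nonnegative function is a
   supremum over its simple minorants. *)
Lemma ge0_le_integral_nonmeasurable (D : set T) (f g : T -> \bar R) :
  (forall x, D x -> 0 <= f x) -> (forall x, D x -> f x <= g x) ->
  \int[mu]_(x in D) f x <= \int[mu]_(x in D) g x.
Proof.
move=> f0 fg.
have g0 x : D x -> 0 <= g x by move=> Dx; exact: le_trans (f0 x Dx) (fg x Dx).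
rewrite (ge0_integralE _ f0) (ge0_integralE _ g0).
apply: ereal_sup_le => _ [h hf <-]; exists h => //= x.
apply: le_trans (hf x) _; rewrite /patch; case: ifP => // /[!inE] Dx.
exact: fg.
Qed.

Lemma scaled_integral_le (S : set T) (g : T -> R) (c : R) (F : T -> \bar R) :
  measurable S -> measurable_fun S g -> (forall y, S y -> 0 <= g y)%R ->
  (0 <= c)%R -> (forall y, 0 <= F y) -> (forall y, S y -> (c * g y)%:E <= F y) ->
  c%:E * \int[mu]_(y in S) (g y)%:E <= \int[mu]_y F y.
Proof.
move=> mS mg g0 c0 F0 cgF.
rewrite -ge0_integralZl_EFin //; last exact/measurable_EFinP.
rewrite integral_mkcond; apply: ge0_le_integral_nonmeasurable => y _.
  by rewrite /patch; case: ifP => // /[!inE] Sy; rewrite -EFinM lee_fin mulr_ge0 ?g0.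
rewrite /patch; case: ifP => [/[!inE] Sy|_]; last exact: F0.
by rewrite -EFinM; exact: cgF.
Qed.

Lemma integral_setC_ge {S : set T} {g : T -> R} {A delta : R} :
  measurable S -> measurable_fun setT g -> (forall y, 0 <= g y)%R ->
  \int[mu]_y (g y)%:E = A%:E -> \int[mu]_(y in S) (g y)%:E < (A - delta)%:E ->
  delta%:E <= \int[mu]_(y in ~` S) (g y)%:E.
Proof.
move=> mS mg g0 gA gS.
have splitA : A%:E = \int[mu]_(y in S) (g y)%:E + \int[mu]_(y in ~` S) (g y)%:E.
  rewrite -gA -(setUv S) ge0_integral_setU //; first exact: measurableC.
  - by rewrite setUv; exact/measurable_EFinP.
  - by move=> y _; rewrite lee_fin.
  - by apply/eqP; rewrite setICr.
rewrite leNgt; apply/negP => gSC.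
by have := lteD gS gSC; rewrite -EFinD subrK -splitA ltxx.
Qed.

Lemma total_mass_ge0 {g : T -> R} {A : R} :
  \int[mu]_y (g y)%:E = A%:E -> (forall y, 0 <= g y)%R -> (0 <= A)%R.
Proof.
by move=> gA g0; rewrite -lee_fin -gA; apply: integral_ge0 => y _; rewrite lee_fin.
Qed.

End integral_bounds.

Section euclidean_distance.
Context {R : realType}.

Lemma dist2_ge0 (x y : R * R) : 0 <= dist2 x y.
Proof. exact: sqrtr_ge0. Qed.

Lemma dist2C (x y : R * R) : dist2 x y = dist2 y x.
Proof. by rewrite /dist2 -(sqrrN (x.1 - _)) -(sqrrN (x.2 - _)) !opprB. Qed.

Lemma ler_sqrt_sumsqrD (u1 u2 v1 v2 : R) :
  Num.sqrt ((u1 + v1) ^+ 2 + (u2 + v2) ^+ 2) <=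
  Num.sqrt (u1 ^+ 2 + u2 ^+ 2) + Num.sqrt (v1 ^+ 2 + v2 ^+ 2).
Proof.
set A := Num.sqrt (u1 ^+ 2 + u2 ^+ 2); set B := Num.sqrt (v1 ^+ 2 + v2 ^+ 2).
have A0 : 0 <= A by exact: sqrtr_ge0.
have B0 : 0 <= B by exact: sqrtr_ge0.
have AA : A ^+ 2 = u1 ^+ 2 + u2 ^+ 2 by rewrite sqr_sqrtr // addr_ge0 // sqr_ge0.
have BB : B ^+ 2 = v1 ^+ 2 + v2 ^+ 2 by rewrite sqr_sqrtr // addr_ge0 // sqr_ge0.
have cauchy_schwarz : u1 * v1 + u2 * v2 <= A * B.
  have lagrange : 0 <= (u1 * v2 - u2 * v1) ^+ 2 by exact: sqr_ge0.
  have : (u1 * v1 + u2 * v2) ^+ 2 <= (A * B) ^+ 2 by rewrite exprMn AA BB; nra.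
  have := mulr_ge0 A0 B0; nra.
rewrite -(ger0_norm (addr_ge0 A0 B0)) -sqrtr_sqr; apply: ler_wsqrtr; nra.
Qed.

Lemma dist2_triangle (x y z : R * R) : dist2 x z <= dist2 x y + dist2 y z.
Proof.
rewrite /dist2 -[x.1 - z.1](subrKA y.1) -[x.2 - z.2](subrKA y.2).
exact: ler_sqrt_sumsqrD.
Qed.

Lemma measurable_dist2 (x : R * R) : measurable_fun setT (dist2 x).
Proof.
apply: measurableT_comp; first exact: continuous_measurable_fun (@sqrt_continuous R).
by apply: measurable_funD; apply: measurable_funX; apply: measurable_funB.
Qed.

Lemma measurable_eball2 (x : R * R) (r : R) : measurable (eball2 x r).
Proof.
have := measurable_dist2 x measurableT _ (measurable_itv `]-oo, r[).
by rewrite setTI; congr measurable; apply/seteqP; split => y /=; rewrite in_itv.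
Qed.

End euclidean_distance.

Section logarithmic_kernel.
Context {R : realType}.

Lemma ln1D_ge0 (u : R) : 0 <= u -> 0 <= ln (1 + u).
Proof. by move=> u0; apply: ln_ge0; lra. Qed.

Lemma ler_ln1D (u v : R) : 0 <= u -> u <= v -> ln (1 + u) <= ln (1 + v).
Proof. by move=> u0 uv; rewrite ler_ln ?posrE; lra. Qed.

Lemma ln1D_gt_eventually (M p : R) : 0 < p ->
  exists xi, 0 < xi /\ forall r, xi < r -> M < ln (1 + r) * p.
Proof.
move=> p0; exists (expR (`|M| / p)); split=> [|r xir]; first exact: expR_gt0.
have : `|M| / p < ln (1 + r).
  by rewrite -[X in X < _]expRK ltr_ln ?posrE; have := expR_gt0 (`|M| / p); lra.
by rewrite ltr_pdivrMr //; apply: le_lt_trans (ler_norm M).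
Qed.

Lemma B1_ge_separated {rho tau : R * R -> R} {A : set (R * R)}
    {S : R * R -> set (R * R)} {s delta : R} :
  0 <= s -> 0 <= delta -> measurable A -> (forall x, measurable (S x)) ->
  measurable_fun setT rho -> measurable_fun setT tau ->
  (forall x, 0 <= rho x) -> (forall y, 0 <= tau y) ->
  (forall x y, A x -> S x y -> s <= dist2 x y) ->
  (forall x, A x -> delta%:E <= \int[@leb2 R]_(y in S x) (tau y)%:E)%E ->
  ((ln (1 + s) * delta)%:E * \int[@leb2 R]_(x in A) (rho x)%:E <= B1 rho tau)%E.
Proof.
move=> s0 delta0 mA mS mrho mtau rho0 tau0 sep tau_S.
have kernel0 x y : 0 <= ln (1 + dist2 x y) * rho x * tau y.
  by rewrite !mulr_ge0 ?ln1D_ge0 ?dist2_ge0.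
have lns0 : 0 <= ln (1 + s) by exact: ln1D_ge0.
apply: scaled_integral_le => //; first exact: measurable_funS mrho.
- by rewrite mulr_ge0.
- by move=> x; apply: integral_ge0 => y _; rewrite lee_fin.
move=> x Ax.
have inner : ((ln (1 + s) * rho x)%:E * \int[@leb2 R]_(y in S x) (tau y)%:E <=
    \int[@leb2 R]_y (ln (1 + dist2 x y) * rho x * tau y)%:E)%E.
  apply: scaled_integral_le => //; first exact: mS.
  - exact: measurable_funS mtau.
  - by rewrite mulr_ge0.
  - by move=> y; rewrite lee_fin.
  - by move=> y Sxy; rewrite lee_fin ler_wpM2r // ler_wpM2r // ler_ln1D // sep.
apply: le_trans inner; rewrite mulrAC EFinM.
by apply: lee_wpmul2l; [rewrite lee_fin mulr_ge0 | exact: tau_S].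
Qed.

End logarithmic_kernel.

Section concentration.
Context {R : realType} {rho tau : R * R -> R} {a b M : R}.
Hypotheses (mrho : measurable_fun setT rho) (mtau : measurable_fun setT tau).
Hypotheses (rho0 : forall x, 0 <= rho x) (tau0 : forall y, 0 <= tau y).
Hypothesis rho_a : (\int[@leb2 R]_x (rho x)%:E = a%:E)%E.
Hypothesis tau_b : (\int[@leb2 R]_y (tau y)%:E = b%:E)%E.
Hypothesis B1_le : (B1 rho tau <= M%:E)%E.

Lemma exists_ball_tau_mass (s delta : R) :
  0 <= s -> 0 <= delta -> M < ln (1 + s) * (delta * a) ->
  exists x, ((b - delta)%:E <= \int[@leb2 R]_(y in eball2 x s) (tau y)%:E)%E.
Proof.
move=> s0 delta0 Mlt; apply: contrapT => no_ball.
have far x : (delta%:E <= \int[@leb2 R]_(y in ~` eball2 x s) (tau y)%:E)%E.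
  apply: integral_setC_ge tau_b _ => //; first exact: measurable_eball2.
  by rewrite ltNge; apply/negP => ball_x; apply: no_ball; exists x.
have sep x y : setT x -> (~` eball2 x s) y -> s <= dist2 x y.
  by move=> _ /negP; rewrite -leNgt.
have := B1_ge_separated s0 delta0 measurableT
  (fun x => measurableC (measurable_eball2 x s)) mrho mtau rho0 tau0 sep (fun x _ => far x).
by rewrite rho_a -EFinM => /le_trans/(_ B1_le); rewrite lee_fin; lra.
Qed.

Lemma rho_mass_near_tau_ball (x0 : R * R) (r eps : R) :
  0 < r -> 0 <= eps ->
  ((b / 2)%:E <= \int[@leb2 R]_(y in eball2 x0 (r / 2)) (tau y)%:E)%E ->
  M < ln (1 + r / 2) * (b / 2 * eps) ->
  ((a - eps)%:E <= \int[@leb2 R]_(y in eball2 x0 r) (rho y)%:E)%E.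
Proof.
move=> r0 eps0 tau_half Mlt.
have b0 := total_mass_ge0 tau_b tau0.
rewrite leNgt; apply/negP => rho_ball.
have rho_far : (eps%:E <= \int[@leb2 R]_(y in ~` eball2 x0 r) (rho y)%:E)%E.
  by apply: integral_setC_ge rho_a rho_ball => //; exact: measurable_eball2.
have sep x y : (~` eball2 x0 r) x -> eball2 x0 (r / 2) y -> r / 2 <= dist2 x y.
  rewrite /eball2 /= => /negP; rewrite -leNgt => x_far y_near.
  by have := dist2_triangle x0 y x; rewrite (dist2C y x); lra.
have r20 : 0 <= r / 2 by lra.
have b20 : 0 <= b / 2 by lra.
have := B1_ge_separated r20 b20 (measurableC (measurable_eball2 x0 r))
  (fun=> measurable_eball2 x0 (r / 2)) mrho mtau rho0 tau0 sep (fun _ _ => tau_half).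
have c0 : (0 <= (ln (1 + r / 2) * (b / 2))%:E)%E by rewrite lee_fin mulr_ge0 ?ln1D_ge0.
move=> /(le_trans (lee_wpmul2l c0 rho_far))/le_trans/(_ B1_le).
by rewrite -EFinM lee_fin; lra.
Qed.

(* The three products are the thresholds needed by the three uses of the
   separation bound: [tau] at radius [r/2], [rho] at radius [r], [tau] at
   radius [r]. *)
Lemma concentration_in_balls (r eps : R) : 0 < r -> 0 < eps ->
  M < ln (1 + r / 2) * Num.min (eps * a) (Num.min (b / 2 * a) (b / 2 * eps)) ->
  (exists x, ((a - eps)%:E <= \int[@leb2 R]_(y in eball2 x r) (rho y)%:E)%E) /\
  (exists x, ((b - eps)%:E <= \int[@leb2 R]_(y in eball2 x r) (tau y)%:E)%E).
Proof.
move=> r0 eps0; set p := Num.min _ _ => Mlt.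
have a0 := total_mass_ge0 rho_a rho0.
have b0 := total_mass_ge0 tau_b tau0.
have Mlt_half q : p <= q -> M < ln (1 + r / 2) * q.
  by move=> pq; apply: lt_le_trans Mlt _; apply: ler_wpM2l pq; apply: ln1D_ge0; lra.
have r20 : 0 <= r / 2 by lra.
have b20 : 0 <= b / 2 by lra.
split.
- have [|x0 tau_half] := exists_ball_tau_mass (r / 2) (b / 2) r20 b20.
    by apply: Mlt_half; rewrite !ge_min lexx orbT.
  rewrite (_ : b - b / 2 = b / 2) in tau_half; last lra.
  exists x0; apply: rho_mass_near_tau_ball tau_half _ => //; first exact: ltW.
  by apply: Mlt_half; rewrite !ge_min lexx !orbT.
- apply: exists_ball_tau_mass (ltW r0) (ltW eps0) _.
  have p_le : p <= eps * a by rewrite ge_min lexx.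
  apply: lt_le_trans (Mlt_half _ p_le) _.
  by apply: ler_wpM2r; [exact: mulr_ge0 (ltW eps0) a0 | apply: ler_ln1D; lra].
Qed.

End concentration.

Theorem lemma3p2 (R : realType) (rho tau : nat -> R * R -> R) (a b : R) :
  0 < a -> 0 < b ->
  (forall n, measurable_fun setT (rho n)) ->
  (forall n, measurable_fun setT (tau n)) ->
  (forall n x, 0 < rho n x) ->
  (forall n x, 0 < tau n x) ->
  (forall n, (\int[@leb2 R]_x (rho n x)%:E = a%:E)%E) ->
  (forall n, (\int[@leb2 R]_x (tau n x)%:E = b%:E)%E) ->
  (exists M : R, forall n, (B1 (rho n) (tau n) <= M%:E)%E) ->
  forall eps : R, 0 < eps ->
  exists xi : R, 0 < xi /\
    forall r : R, xi < r -> forall n : nat,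
      ((a - eps)%:E <= ereal_sup [set (\int[@leb2 R]_(y in eball2 x r) (rho n y)%:E)%E
                                  | x in [set: R * R]])%E /\
      ((b - eps)%:E <= ereal_sup [set (\int[@leb2 R]_(y in eball2 x r) (tau n y)%:E)%E
                                  | x in [set: R * R]])%E.
Proof.
move=> a0 b0 mrho mtau rho_gt0 tau_gt0 rho_a tau_b [M B1_le] eps eps0.
set p := Num.min (eps * a) (Num.min (b / 2 * a) (b / 2 * eps)).
have p0 : 0 < p by rewrite !lt_min !mulr_gt0 ?divr_gt0.
have [xi [xi0 Mlt]] := ln1D_gt_eventually M p p0.
exists (2 * xi); split=> [|r xir n]; first by rewrite mulr_gt0.
have [[x0 rho_ball] [x tau_ball]] := concentration_in_balls (mrho n) (mtau n)
  (fun x => ltW (rho_gt0 n x)) (fun y => ltW (tau_gt0 n y)) (rho_a n) (tau_b n)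
  (B1_le n) r eps ltac:(lra) eps0 (Mlt (r / 2) ltac:(lra)).
split; [apply: le_trans rho_ball _ | apply: le_trans tau_ball _].
- by apply: ereal_sup_ubound; exists x0.
- by apply: ereal_sup_ubound; exists x.
Qed.
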